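(* For every integer $d\geq1$ and positive integer $k$, $\gamma_{gr}^{L,k}(Q_d)\leq 2^d-d+k$.
   Context: $Q_d$ is the $d$-dimensional hypercube: vertices are the $0$-$1$ strings of length $d$, adjacent iff they differ in exactly one position. For a vertex $v$, $N(v)$ is its open neighborhood and $N[v]=N(v)\cup\{v\}$. A sequence $S=(v_1,\ldots,v_m)$ of distinct vertices is a $k$-$L$-sequence if for each $i$ there is $u_i\in N[v_i]$ such that the number of indices $j<i$ with $u_i\in N(v_j)$ is less than $k$. $\gamma_{gr}^{L,k}(G)$ is the maximum length of a $k$-$L$-sequence of $G$. *)

From mathcomp Require Import all_boot.
Set Implicit Arguments. Unset Strict Implicit. Unset Printing Implicit Defensive.

(* Vertices of the hypercube Q_d : 0-1 strings of length d. *)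
Definition vert (d : nat) := {ffun 'I_d -> bool}.

Definition hadj (d : nat) (u v : vert d) : bool :=
  #|[set i : 'I_d | u i != v i]| == 1.

Definition nbh (d : nat) (v : vert d) : {set vert d} := [set u | hadj v u].
Definition cnbh (d : nat) (v : vert d) : {set vert d} := v |: nbh v.

Definition kLseq (d k : nat) (S : seq (vert d)) : Prop :=
  uniq S /\
  forall i, i < size S ->
    exists2 u, u \in cnbh (nth [ffun => false] S i) &
      count (fun w => u \in nbh w) (take i S) < k.

(* gamma_gr^{L,k}(Q_d) <= b  iff every k-L-sequence has length <= b *)
Definition gamma_grLk_le (d k b : nat) : Prop :=
  forall S : seq (vert d), kLseq k S -> size S <= b.

From mathcomp Require Import all_boot.
Set Implicit Arguments. Unset Strict Implicit. Unset Printing Implicit Defensive.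

(* Look at the last vertex v_m of a k-L-sequence and its witness u.  The
   vertices of Q_d dominating u are exactly the d neighbours of u, and fewer
   than k of them occur among v_1, ..., v_(m-1).  Those distinct vertices
   therefore number at most (k - 1) + (2^d - d), so m <= 2^d - d + k. *)

Lemma count_predC_uniq_le (T : finType) (P : pred T) (s : seq T) :
  uniq s -> count (predC P) s <= #|predC P|.
Proof.
move=> uniq_s; rewrite -size_filter cardE; apply: uniq_leq_size.
  exact: filter_uniq.
by move=> x; rewrite mem_filter mem_enum => /andP[].
Qed.

Lemma size_uniq_le_count (T : finType) (P : pred T) (s : seq T) :
  uniq s -> size s <= count P s + (#|T| - #|P|).
Proof.
move=> uniq_s; rewrite -(count_predC P) leq_add2l.
by rewrite -(cardC P) addKn count_predC_uniq_le.
Qed.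

Section Hypercube.

Variable d : nat.

Lemma card_vert : #|vert d| = 2 ^ d.
Proof. by rewrite card_ffun card_bool card_ord. Qed.

Definition flip (u : vert d) (i : 'I_d) : vert d :=
  [ffun j => if j == i then ~~ u j else u j].

Lemma flip_inj (u : vert d) : injective (flip u).
Proof.
move=> i i' /ffunP /(_ i); rewrite !ffunE eqxx.
by case: eqP => [-> | _]; last case: (u i).
Qed.

Lemma in_nbhC (u w : vert d) : (u \in nbh w) = (w \in nbh u).
Proof.
rewrite !inE /hadj.
by under eq_finset => i do rewrite eq_sym.
Qed.

Lemma nbh_flip (u : vert d) : nbh u = [set flip u i | i : 'I_d].
Proof.
apply/setP => w; rewrite inE /hadj; apply/cards1P/imsetP => [[i diff_i] | [i _ ->]].
- exists i => //; apply/ffunP => j; rewrite ffunE.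
  have /setP/(_ j) := diff_i; rewrite !inE.
  have [-> | _] := eqVneq j i; first by case: (u i); case: (w i).
  by move/negbFE/eqP.
- exists i; apply/setP => j; rewrite !inE ffunE.
  by have [-> | _] := eqVneq j i; [case: (u i) | rewrite eqxx].
Qed.

Lemma card_nbh (u : vert d) : #|nbh u| = d.
Proof. by rewrite nbh_flip card_imset ?card_ord //; apply: flip_inj. Qed.

End Hypercube.

Theorem mainTheorem12 (d k : nat) (hd : 1 <= d) (hk : 0 < k) :
  forall S : seq (vert d), kLseq k S -> size S <= 2 ^ d - d + k.
Proof.
move=> S [uniq_S witness].
case size_S: (size S) => [// | m].
have [|u _ few_dominators] := witness m; first by rewrite size_S.
have size_prefix : size (take m S) = m by rewrite size_take size_S ltnSn.
have dominators_nbh :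
    count (fun w => u \in nbh w) (take m S) = count (mem (nbh u)) (take m S).
  by apply: eq_count => w; rewrite in_nbhC.
have := size_uniq_le_count (mem (nbh u)) (take_uniq m uniq_S).
rewrite size_prefix -dominators_nbh card_vert card_nbh => m_le.
by rewrite addnC (leq_ltn_trans m_le) // ltn_add2r.
Qed.
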